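(* Let $n\ge 1$, $k\ge 2$, let $\mathbb{V}_n$ be an $n$-dimensional vector space over $\mathbb{F}_2$ with an inner product $u\cdot x$, and let $f:\mathbb{V}_n\to\mathbb{Z}_{2^k}$ be written as $f(x)=a_0(x)+2a_1(x)+\cdots+2^{k-1}a_{k-1}(x)$ with Boolean functions $a_j:\mathbb{V}_n\to\mathbb{F}_2$. For $0\le i\le 2^{k-1}-1$ with $i=\sum_{j=0}^{k-2}i_j2^j$, $i_j\in\{0,1\}$, let $g_i=a_{k-1}\oplus i_0a_0\oplus i_1a_1\oplus\cdots\oplus i_{k-2}a_{k-2}$, and for $u\in\mathbb{V}_n$ let $\mathcal{W}(u)=(\mathcal{W}_{g_0}(u),\mathcal{W}_{g_1}(u),\ldots,\mathcal{W}_{g_{2^{k-1}-1}}(u))$. (i) If $n$ is even, then $f$ is gbent if and only if every $g_i$ ($0\le i\le 2^{k-1}-1$) is bent and for every $u\in\mathbb{V}_n$ we have $\mathcal{W}(u)=\pm 2^{n/2}H_{2^{k-1}}^{(r)}$ for some $r\in\{0,\ldots,2^{k-1}-1\}$ (depending on $u$). (ii) If $n$ is odd, then $f$ is gbent if and only if every $g_i$ is semi-bent and for every $u\in\mathbb{V}_n$ we have $\mathcal{W}(u)=(\pm 2^{\frac{n+1}{2}}H^{(r)}_{2^{k-2}},\mathbf{0}_{2^{k-2}})$ or $\mathcal{W}(u)=(\mathbf{0}_{2^{k-2}},\pm 2^{\frac{n+1}{2}}H^{(r)}_{2^{k-2}})$ for some $r\in\{0,\ldots,2^{k-2}-1\}$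 (depending on $u$), where $\mathbf{0}_{2^{k-2}}$ is the all-zero vector of length $2^{k-2}$.
   Context: For a Boolean function $g:\mathbb{V}_n\to\mathbb{F}_2$, $\mathcal{W}_g(u)=\sum_{x\in\mathbb{V}_n}(-1)^{g(x)\oplus u\cdot x}$. $g$ is bent if $|\mathcal{W}_g(u)|=2^{n/2}$ for all $u$; for odd $n$, $g$ is semi-bent if $\mathcal{W}_g(u)\in\{0,\pm2^{\frac{n+1}{2}}\}$ for all $u$. For $f:\mathbb{V}_n\to\mathbb{Z}_{2^k}$ the generalized Walsh–Hadamard transform is $\mathcal{H}_f(u)=\sum_{x\in\mathbb{V}_n}\zeta_{2^k}^{f(x)}(-1)^{u\cdot x}$ with $\zeta_{2^k}=e^{2\pi i/2^k}$, and $f$ is gbent if $|\mathcal{H}_f(u)|=2^{n/2}$ for all $u\in\mathbb{V}_n$. $H_{2^m}$ denotes the Sylvester–Hadamard matrix ($H_1=(1)$, $H_{2^m}=\begin{pmatrix}H_{2^{m-1}}&H_{2^{m-1}}\\H_{2^{m-1}}&-H_{2^{m-1}}\end{pmatrix}$), rows indexed from $0$, $H_{2^m}^{(r)}$ its $r$-th row. *)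

From mathcomp Require Import all_boot all_order all_algebra all_field.
Set Implicit Arguments. Unset Strict Implicit. Unset Printing Implicit Defensive.
Import Order.TTheory GRing.Theory Num.Theory.
Local Open Scope ring_scope.

(* V_n = F_2^n, with F_2 represented by bool (addition = xor, product = &&). *)
Definition Vn (n : nat) := {ffun 'I_n -> bool}.

Definition dotv n (u x : Vn n) : bool := \big[addb/false]_(i < n) (u i && x i).

Definition walsh n (g : Vn n -> bool) (u : Vn n) : int :=
  \sum_(x : Vn n) (-1) ^+ (g x (+) dotv u x).

Definition bent n (g : Vn n -> bool) : Prop :=
  forall u, `|(walsh g u)%:~R : algC| = sqrtC (2 ^+ n).

Definition semibent n (g : Vn n -> bool) : Prop :=
  forall u, walsh g u \in [:: 0; 2 ^+ ((n + 1) %/ 2); - 2 ^+ ((n + 1) %/ 2)].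

(* zeta_{2^k} = e^{2 pi i / 2^k}: the 2^(k-1)-th root of -1 with minimal
   argument, i.e. e^{i pi / 2^(k-1)} *)
Definition zeta (k : nat) : algC := (2 ^ k.-1)%N.-root (-1).

Definition gwalsh n k (f : Vn n -> 'I_(2 ^ k)) (u : Vn n) : algC :=
  \sum_(x : Vn n) zeta k ^+ (f x) * (-1) ^+ (dotv u x).

Definition gbent n k (f : Vn n -> 'I_(2 ^ k)) : Prop :=
  forall u, `|gwalsh f u| = sqrtC (2 ^+ n).

(* j-th binary digit a_j of f: f(x) = sum_j 2^j a_j(x) *)
Definition comp n k (f : Vn n -> 'I_(2 ^ k)) (j : nat) (x : Vn n) : bool :=
  odd (f x %/ 2 ^ j).

Definition gi n k (f : Vn n -> 'I_(2 ^ k)) (i : nat) (x : Vn n) : bool :=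
  comp f k.-1 x (+) \big[addb/false]_(j < k.-1) (odd (i %/ 2 ^ j) && comp f j x).

(* entry (r, c) of the Sylvester-Hadamard matrix H_{2^m}, defined by the
   block recursion H_{2^{m+1}} = [[H, H], [H, -H]] *)
Fixpoint sylv (m r c : nat) : int :=
  match m with
  | 0 => 1
  | m'.+1 =>
      let h := (2 ^ m')%N in
      (if (h <= r)%N && (h <= c)%N then -1 else 1) * sylv m' (r %% h) (c %% h)
  end.

(* Write f(x) = t(x) + 2^(k-1) a_(k-1)(x) with t(x) = f(x) mod 2^(k-1), and let
   c_u(t) be the sum of (-1)^(a_(k-1)(x) + u.x) over the x with t(x) = t.  With
   zeta = zeta_(2^k) we get H_f(u) = sum_t c_u(t) zeta^t, while the vector W(u) of
   the Walsh transforms of the g_i is the Sylvester-Hadamard transform of c_u.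
   So f is gbent iff |sum_t c_u(t) zeta^t|^2 = 2^n for every u.

   In Z[zeta] the element pi = 1 - zeta is prime with residue field F_2, and 2 is
   pi^(2^(k-1)) times a unit.  If x x^* = 4^l with l > 0, the pi-adic valuation of
   x is therefore at least that of 2, so 2 divides x; and x x^* = 1 forces the
   sum of squares of the coefficients of x to be 1, so x is a power of zeta.
   Hence x x^* = 4^l iff x = +-2^l zeta^r, i.e. c_u = +-2^l delta_r, i.e.
   W(u) = +-2^l H^(r).  For odd n, multiplying by 1 + zeta^(2^(k-2)), of norm 2,
   reduces to the even case; on coefficients it replaces (c_u(t), c_u(t + 2^(k-2)))
   by their difference and sum, which become the two halves of W(u). *)

From Pilot Require Import Defs.
From mathcomp Require Import all_boot all_order all_algebra all_field.
From mathcomp Require Import ring zify.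
Set Implicit Arguments. Unset Strict Implicit. Unset Printing Implicit Defensive.
Import Order.TTheory GRing.Theory Num.Theory.
Local Open Scope ring_scope.

(** * The ring Z[z] *)

Implicit Types (p q : {poly int}) (x y : algC).

Definition zhorner (z : algC) : {rmorphism {poly int} -> algC} :=
  horner_eval z \o map_poly intr.

Lemma zhornerC z a : zhorner z a%:P = a%:~R.
Proof. by rewrite /zhorner /= map_polyC /horner_eval hornerC. Qed.

Lemma zhornerX z : zhorner z 'X = z.
Proof. by rewrite /zhorner /= map_polyX /horner_eval hornerX. Qed.

Lemma zhornerXn z n : zhorner z 'X^n = z ^+ n.
Proof. by rewrite rmorphXn zhornerX. Qed.

Lemma zhorner_comp z p q : zhorner z (p \Po q) = zhorner (zhorner z q) p.
Proof. by rewrite /zhorner /= map_comp_poly /horner_eval horner_comp. Qed.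

Lemma zhorner_coef z (p : {poly int}) n : (size p <= n)%N ->
  zhorner z p = \sum_(i < n) (p`_i)%:~R * z ^+ i.
Proof.
move=> sp; rewrite /zhorner /= /horner_eval (@horner_coef_wide _ n).
  by apply: eq_bigr => i _; rewrite coef_map.
by rewrite size_map_inj_poly //; exact: intr_inj.
Qed.

Lemma conj_zhorner z p : (zhorner z p)^* = zhorner z^* p.
Proof.
rewrite /zhorner /= /horner_eval -horner_map /= -map_poly_comp.
by congr (_.[_]); apply: eq_map_poly => a /=; rewrite rmorph_int.
Qed.

Definition inZz (z x : algC) : Prop := exists p, x = zhorner z p.

Definition zdvd (z a x : algC) : Prop := exists2 y, inZz z y & x = a * y.

Section RingOfPolynomialValues.
Variable z : algC.

Lemma inZz_int (a : int) : inZz z a%:~R. Proof. by exists a%:P; rewrite zhornerC. Qed.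
Lemma inZz0 : inZz z 0. Proof. by exists 0; rewrite rmorph0. Qed.
Lemma inZz1 : inZz z 1. Proof. by exists 1; rewrite rmorph1. Qed.
Lemma inZz_nat n : inZz z n%:R. Proof. by exists n%:R; rewrite rmorph_nat. Qed.
Lemma inZz_root : inZz z z. Proof. by exists 'X; rewrite zhornerX. Qed.
Lemma inZzD x y : inZz z x -> inZz z y -> inZz z (x + y).
Proof. by move=> [p ->] [q ->]; exists (p + q); rewrite rmorphD. Qed.
Lemma inZzN x : inZz z x -> inZz z (- x).
Proof. by move=> [p ->]; exists (- p); rewrite rmorphN. Qed.
Lemma inZzB x y : inZz z x -> inZz z y -> inZz z (x - y).
Proof. by move=> hx hy; apply/inZzD/inZzN. Qed.
Lemma inZzM x y : inZz z x -> inZz z y -> inZz z (x * y).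
Proof. by move=> [p ->] [q ->]; exists (p * q); rewrite rmorphM. Qed.
Lemma inZzX x n : inZz z x -> inZz z (x ^+ n).
Proof. by move=> [p ->]; exists (p ^+ n); rewrite rmorphXn. Qed.
Lemma inZz_sum (I : finType) (F : I -> algC) :
  (forall i, inZz z (F i)) -> inZz z (\sum_i F i).
Proof. by move=> h; apply: (big_ind (inZz z)) => //; [exact: inZz0|exact: inZzD]. Qed.

Lemma inZz_zhorner w p : inZz z w -> inZz z (zhorner w p).
Proof. by move=> [q ->]; exists (p \Po q); rewrite zhorner_comp. Qed.

Lemma zdvd_trans a b x : zdvd z a b -> zdvd z b x -> zdvd z a x.
Proof.
by move=> [u hu ->] [v hv ->]; exists (u * v); [exact: inZzM | rewrite mulrA].
Qed.

End RingOfPolynomialValues.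

Definition zpoly (z : algC) n (c : nat -> int) : algC :=
  \sum_(t < n) (c t)%:~R * z ^+ t.

Section CoefficientSums.
Variable z : algC.
Implicit Types (n : nat) (c b : nat -> int).

Lemma eq_zpoly n c b : (forall t, (t < n)%N -> c t = b t) -> zpoly z n c = zpoly z n b.
Proof. by move=> e; apply: eq_bigr => t _; rewrite e. Qed.

Lemma zpolyD n c b : zpoly z n (fun t => c t + b t) = zpoly z n c + zpoly z n b.
Proof. by rewrite -big_split; apply: eq_bigr => t _; rewrite rmorphD mulrDl. Qed.

Lemma zpolyB n c b : zpoly z n (fun t => c t - b t) = zpoly z n c - zpoly z n b.
Proof. by rewrite -sumrB; apply: eq_bigr => t _; rewrite rmorphB mulrBl. Qed.

Lemma zpoly_split n c :
  zpoly z (n + n) c = zpoly z n c + z ^+ n * zpoly z n (fun t => c (t + n)%N).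
Proof.
rewrite /zpoly big_split_ord /= mulr_sumr; congr (_ + _).
by apply: eq_bigr => t _; rewrite [(n + t)%N]addnC exprD; ring.
Qed.

Lemma zpoly_delta n r (a : int) : (r < n)%N ->
  zpoly z n (fun t => a * (t == r)%:R) = a%:~R * z ^+ r.
Proof.
move=> lt_rn; rewrite /zpoly (bigD1 (Ordinal lt_rn)) //= eqxx mulr1 big1 ?addr0 // => t.
by rewrite -val_eqE /= => /negbTE ->; rewrite mulr0 mul0r.
Qed.

Lemma inZz_zpoly n c : inZz z (zpoly z n c).
Proof. by apply: inZz_sum => t; apply/inZzM/inZzX/inZz_root/inZz_int. Qed.

End CoefficientSums.

Lemma sum_sqr_eq1 (I : finType) (c : I -> int) :
  \sum_i c i ^+ 2 = 1 -> exists t, c t ^+ 2 = 1 /\ forall i, i != t -> c i = 0.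
Proof.
move=> hs; have [t ct_neq0|c0] := pickP (fun i => c i != 0); last first.
  by move: hs; rewrite big1 // => i _; move/negbFE/eqP: (c0 i) => ->; rewrite expr0n.
rewrite (bigD1 t) //= in hs.
have rest_ge0 : 0 <= \sum_(i | i != t) c i ^+ 2 by apply: sumr_ge0 => i _; exact: sqr_ge0.
have ct_ge1 : 1 <= c t ^+ 2 by move: (c t) ct_neq0 => a; nia.
have [ct1 rest0] : c t ^+ 2 = 1 /\ \sum_(i | i != t) c i ^+ 2 = 0.
  by move: hs rest_ge0 ct_ge1; move: (c t ^+ 2) (\sum_(i | _) _) => A B; lia.
exists t; split => // i neq_it.
by apply/eqP; rewrite -sqrf_eq0; apply/eqP/(psumr_eq0P _ rest0) => // j _; exact: sqr_ge0.
Qed.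

Lemma one_subX_geom (u : algC) k : 1 - u ^+ k = (1 - u) * \sum_(i < k) u ^+ i.
Proof. by rewrite -opprB subrX1 -mulNr opprB. Qed.

(** * Integers of the 2^(m+1)-th cyclotomic field *)

Section CyclotomicIntegers.
Variables (m : nat) (z : algC).
Hypothesis zprim : (2 ^ m.+1).-primitive_root z.
Local Notation N := (2 ^ m)%N.
Local Notation pi := (1 - z).

Let N_gt0 : (0 < N)%N := expn_gt0 2 m.

Lemma prim_expr_half : z ^+ N = -1.
Proof.
have /eqP : (z ^+ N) ^+ 2 = 1 by rewrite -exprM -expnSr (prim_expr_order zprim).
rewrite sqrf_eq1 => /orP[/eqP zN1|/eqP //].
have := prim_order_dvd zprim N; rewrite zN1 eqxx => /(dvdn_leq N_gt0).
by rewrite leq_exp2l // ltnn.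
Qed.

Lemma root_mul_conj : z * z^* = 1.
Proof.
rewrite -normCK; have /eqP := congr1 (fun x => `|x|) prim_expr_half.
by rewrite normrX normrN1 pexpr_eq1 ?N_gt0 // => /eqP ->; rewrite expr1n.
Qed.

Lemma conj_root : z^* = - z ^+ N.-1.
Proof.
have e : z ^+ N = z * z ^+ N.-1 by rewrite -exprS prednK ?N_gt0.
by rewrite -[z^*]mulr1 -[1]opprK -prim_expr_half e mulrN mulrA (mulrC _ z) root_mul_conj mul1r.
Qed.

Lemma inZz_conj x : inZz z x -> inZz z x^*.
Proof.
move=> [p ->]; rewrite conj_zhorner; apply: inZz_zhorner.
by rewrite conj_root; apply/inZzN/inZzX/inZz_root.
Qed.

Lemma zhorner_eq0_small p : (size p <= N)%N -> zhorner z p = 0 -> p = 0.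
Proof.
move=> sp zp; apply/eqP; apply: contraT => p_neq0.
have [pm [Dpm _] minP] := minCpolyP z.
have szm : size (minCpoly z) = N.+1.
  by rewrite (minCpoly_cyclotomic zprim) size_cyclotomic totient_pfactor //= mul1n.
set pQ : {poly rat} := map_poly intr p.
have szQ : size pQ = size p by apply: size_map_inj_poly => //; exact: intr_inj.
have : root (map_poly ratr pQ) z.
  rewrite /pQ -map_poly_comp (eq_map_poly (fun a => ratr_int _ a)) /root.
  by rewrite -[_.[z]]/(zhorner z p) zp.
have pQ_neq0 : pQ != 0 by rewrite -size_poly_eq0 szQ size_poly_eq0.
rewrite minP => /(dvdp_leq pQ_neq0).
by rewrite -(size_map_poly (ratr : rat -> algC)) -Dpm szm szQ ltnNge sp.
Qed.

Local Notation XN1 := ('X^N + 1 : {poly int}).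

Lemma monic_XN1 : XN1 \is monic.
Proof. by rewrite -[1]/(1%:P) monicXnaddC ?N_gt0. Qed.

Lemma zhorner_rmodp p : zhorner z (Pdiv.Ring.rmodp p XN1) = zhorner z p.
Proof.
rewrite {2}(Pdiv.RingMonic.rdivp_eq monic_XN1 p) rmorphD rmorphM rmorphD.
by rewrite zhornerXn prim_expr_half rmorph1 addNr mulr0 add0r.
Qed.

Lemma size_rmodp_XN1 p : (size (Pdiv.Ring.rmodp p XN1) <= N)%N.
Proof.
have := Pdiv.Ring.ltn_rmodp p XN1.
by rewrite monic_neq0 ?monic_XN1 // -[1]/(1%:P) size_XnaddC ?N_gt0 // ltnS.
Qed.

Lemma inZz_small x : inZz z x -> exists2 p : {poly int}, (size p <= N)%N & x = zhorner z p.
Proof.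
by move=> [p ->]; exists (Pdiv.Ring.rmodp p XN1); rewrite ?zhorner_rmodp ?size_rmodp_XN1.
Qed.

Lemma zhorner_eq0 p : zhorner z p = 0 -> exists q, p = q * XN1.
Proof.
move=> zp; exists (Pdiv.Ring.rdivp p XN1).
rewrite {1}(Pdiv.RingMonic.rdivp_eq monic_XN1 p) [X in _ + X]zhorner_eq0_small ?addr0 //.
  exact: size_rmodp_XN1.
by rewrite zhorner_rmodp.
Qed.

Lemma pi_neq0 : pi != 0.
Proof.
rewrite subr_eq0; apply/eqP => z1; have /eqP := prim_expr_half.
by rewrite -z1 expr1n -subr_eq0 opprK (_ : 1 + 1 = 2%:R) // pnatr_eq0.
Qed.

Lemma inZz_pi : inZz z pi. Proof. exact/inZzB/inZz_root/inZz1. Qed.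

Lemma two_eq_pi_geom : 2 = pi * \sum_(i < N) z ^+ i.
Proof. by rewrite -one_subX_geom prim_expr_half opprK. Qed.

Lemma inZz_modpi x : inZz z x -> exists a : int, exists2 y, inZz z y & x = a%:~R + pi * y.
Proof.
move=> [p ->]; set a := p.[1]; exists a.
have /factor_theorem[q Dq] : root (p - a%:P) 1 by rewrite /root !hornerE subrr.
exists (- zhorner z q); first by apply/inZzN; exists q.
have -> : p = q * ('X - 1%:P) + a%:P by rewrite -Dq subrK.
by rewrite rmorphD rmorphM rmorphB zhornerX !zhornerC; ring.
Qed.

Lemma pi_dvd_int (a : int) : zdvd z pi a%:~R -> (2 %| a)%Z.
Proof.
move=> [_ [q ->] e].
(* Evaluate at 1, where X^N + 1 takes the value 2. *)
have [r Dr] : exists r, a%:P - (1 - 'X) * q = r * ('X^N + 1).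
  by apply: zhorner_eq0; rewrite rmorphB rmorphM rmorphB rmorph1 zhornerX zhornerC e subrr.
move/(congr1 (horner^~ 1)): Dr; rewrite /= !hornerE expr1n => ->.
exact: dvdz_mull.
Qed.

Lemma pi_dvd_intD (a : int) y :
  inZz z y -> zdvd z pi (a%:~R + pi * y) <-> (2 %| a)%Z.
Proof.
move=> hy; split=> [[w hw e]|/dvdzP[b ->]].
  apply: pi_dvd_int; exists (w - y); first exact: inZzB.
  by rewrite mulrBr -e addrK.
exists (b%:~R * \sum_(i < N) z ^+ i + y).
  apply/inZzD/hy/inZzM; first exact: inZz_int.
  by apply: inZz_sum => i; apply/inZzX/inZz_root.
by rewrite intrM (_ : 2%:~R = 2) // two_eq_pi_geom; ring.
Qed.

Lemma pi_prime x y : inZz z x -> inZz z y ->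
  zdvd z pi (x * y) -> zdvd z pi x \/ zdvd z pi y.
Proof.
move=> /inZz_modpi[a [x' hx' ->]] /inZz_modpi[b [y' hy' ->]].
set w := a%:~R * y' + b%:~R * x' + pi * x' * y'.
have hw : inZz z w.
  apply/inZzD/inZzM/hy'/inZzM/hx'/inZz_pi.
  by apply/inZzD/inZzM/hx'/inZz_int/inZzM/hy'/inZz_int.
have -> : (a%:~R + pi * x') * (b%:~R + pi * y') = (a * b)%:~R + pi * w.
  by rewrite intrM /w; ring.
rewrite !pi_dvd_intD // !dvdzE abszM !dvdn2 oddM negb_and.
by case/orP; [left|right].
Qed.

Lemma pi_conj : pi^* = pi * - z^*.
Proof. by rewrite rmorphB /= conjC1 mulrN mulrBl mul1r root_mul_conj opprB. Qed.

Lemma pi_dvd_conj x : zdvd z pi x -> zdvd z pi x^*.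
Proof.
move=> [y hy ->]; exists (- z^* * y^*); last by rewrite rmorphM /= pi_conj mulrA.
by apply/inZzM/inZz_conj/hy/inZzN/inZz_conj/inZz_root.
Qed.

Lemma pi_dvd_norm j x : inZz z x ->
  zdvd z (pi ^+ j.*2) (x * x^*) -> zdvd z (pi ^+ j) x.
Proof.
elim: j x => [|j IH] x hx hn; first by exists x; rewrite ?expr0 ?mul1r.
have [y hy Dx] : zdvd z (pi ^+ j) x.
  apply/IH/(zdvd_trans _ hn) => //; exists (pi ^+ 2); first exact/inZzX/inZz_pi.
  by rewrite -exprD addn2 doubleS.
have [w hw e] := hn.
have zz : (- z^*) ^+ j * (- z) ^+ j = 1 by rewrite -exprMn mulrNN mulrC root_mul_conj expr1n.
have hyy : zdvd z pi (y * y^*).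
  exists (pi * w * (- z) ^+ j); first by apply/inZzM/inZzX/inZzN/inZz_root/inZzM/hw/inZz_pi.
  apply: (mulfI (expf_neq0 j.*2 pi_neq0)).
  transitivity (pi ^+ j.*2 * (y * y^*) * ((- z^*) ^+ j * (- z) ^+ j)).
    by rewrite zz mulr1.
  transitivity (x * x^* * (- z) ^+ j).
    by rewrite Dx rmorphM rmorphXn /= pi_conj exprMn -addnn exprD; ring.
  by rewrite e doubleS -addn2 exprD; ring.
have [y' hy' Dy] : zdvd z pi y.
  by case: (pi_prime hy (inZz_conj hy) hyy) => // /pi_dvd_conj; rewrite conjCK.
by exists y'; rewrite // Dx Dy exprSr mulrA.
Qed.

Lemma pi_exp_dvd_1subX j : (j <= m)%N -> zdvd z (pi ^+ (2 ^ j)%N) (1 - z ^+ (2 ^ j)%N).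
Proof.
elim: j => [|j IH] le_jm; first by exists 1; [exact: inZz1 | rewrite !expr1 mulr1].
set u := z ^+ (2 ^ j)%N.
have hu : inZz z u by apply/inZzX/inZz_root.
have [w hw Du] := IH (ltnW le_jm).
have [v hv Dv] : zdvd z (1 - u) (1 + u).
  exists (\sum_(i < (2 ^ (m - j))%N.+1) u ^+ i); first by apply: inZz_sum => i; apply: inZzX.
  rewrite -one_subX_geom exprS /u -exprM -expnD subnKC ?(ltnW le_jm) //.
  by rewrite prim_expr_half mulrN1 opprK.
exists (w * w * v); first by apply/inZzM/hv/inZzM.
rewrite (_ : z ^+ (2 ^ j.+1)%N = u ^+ 2); last by rewrite expnSr exprM.
rewrite expnSr exprM (_ : 1 - u ^+ 2 = (1 - u) * (1 + u)); last by ring.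
by rewrite Dv Du; ring.
Qed.

Lemma pi_exp_mod2 j : exists2 w, inZz z w & pi ^+ (2 ^ j)%N = 1 - z ^+ (2 ^ j)%N + 2 * w.
Proof.
elim: j => [|j [w hw e]]; first by exists 0; [exact: inZz0 | rewrite !expr1 mulr0 addr0].
set u := z ^+ (2 ^ j)%N in e.
have hu : inZz z u by apply/inZzX/inZz_root.
exists (u ^+ 2 - u + 2 * w * (1 - u) + 2 * w ^+ 2).
  apply/inZzD/inZzM/inZzX/hw/(inZz_nat _ 2).
  apply/inZzD/inZzM/inZzB/hu/inZz1/inZzM/hw/(inZz_nat _ 2).
  exact/inZzB/hu/inZzX.
rewrite (_ : z ^+ (2 ^ j.+1)%N = u ^+ 2); last by rewrite expnSr exprM.
by rewrite expnSr exprM e; ring.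
Qed.

Lemma pi_expN_dvd2 : zdvd z (pi ^+ N) 2.
Proof. by have := pi_exp_dvd_1subX (leqnn m); rewrite prim_expr_half opprK. Qed.

Lemma two_dvd_pi_expN : zdvd z 2 (pi ^+ N).
Proof.
have [w hw ->] := pi_exp_mod2 m.
exists (1 + w); first exact/inZzD/hw/inZz1.
by rewrite prim_expr_half; ring.
Qed.

Lemma coef_mul_XN1 (r : {poly int}) :
  (size (r * ('X^N + 1))%R < N.*2)%N -> (r * ('X^N + 1))`_N.-1 = 0.
Proof.
move=> sz; rewrite mulrDr mulr1 coefD coefMXn ltn_predL N_gt0 add0r.
have [->|r_neq0] := eqVneq r 0; first by rewrite coef0.
apply: nth_default; move: sz; rewrite (size_mul r_neq0 (monic_neq0 monic_XN1)).
rewrite -[1]/(1%:P) size_XnaddC ?N_gt0 // addnS -addnn ltn_add2r => lt_rN.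
by rewrite -ltnS prednK ?N_gt0.
Qed.

Lemma zhorner_rev p : (size p <= N)%N ->
  zhorner z (\poly_(i < N) p`_(N.-1 - i)) = z ^+ N.-1 * (zhorner z p)^*.
Proof.
move=> sp; have zc k : (k <= N.-1)%N -> z ^+ (N.-1 - k) = z ^+ N.-1 * z^* ^+ k.
  move=> le_kN; rewrite -{2}(subnK le_kN) exprD -mulrA -exprMn root_mul_conj.
  by rewrite expr1n mulr1.
rewrite (zhorner_coef _ (size_poly _ _)) (zhorner_coef _ sp) rmorph_sum mulr_sumr.
rewrite (reindex_inj rev_ord_inj); apply: eq_bigr => i _ /=.
have le_iN : (i <= N.-1)%N by rewrite -ltnS prednK ?N_gt0.
rewrite coef_poly rev_ord_proof.
have -> : (N - i.+1 = N.-1 - i)%N by rewrite subnS -subn1 subnAC subn1.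
rewrite subKn // zc // rmorphM rmorphXn /= rmorph_int.
by rewrite mulrCA.
Qed.

(* The reverse of p takes the value z^(N-1) p(z)^* at z, and the coefficient of
   X^(N-1) in p times its reverse is the sum of the squares of the coefficients. *)
Lemma sum_sqr_coef_norm1 p : (size p <= N)%N ->
  zhorner z p * (zhorner z p)^* = 1 -> \sum_(i < N) p`_i ^+ 2 = 1.
Proof.
move=> sp hn; set q := \poly_(i < N) p`_(N.-1 - i).
have [r Dr] : exists r : {poly int}, p * q - 'X^(N.-1) = r * ('X^N + 1).
  apply: zhorner_eq0; rewrite rmorphB rmorphM zhorner_rev // zhornerXn.
  by rewrite mulrCA hn mulr1 subrr.
have := congr1 (fun s : {poly int} => s`_N.-1) Dr.
rewrite coef_mul_XN1; last first.
  rewrite -Dr; apply: (leq_ltn_trans (size_polyD _ _)).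
  rewrite size_polyN size_polyXn prednK ?N_gt0 // gtn_max -addnn.
  have := size_polyMleq p q; have : (size q <= N)%N := size_poly _ _.
  move: sp N_gt0; lia.
rewrite coefB coefXn eqxx mulr1n coefM prednK ?N_gt0 // => /subr0_eq.
apply: etrans; apply: eq_bigr => i _.
have le_iN : (i <= N.-1)%N by rewrite -ltnS prednK ?N_gt0.
have lt_iN : (N.-1 - i < N)%N by rewrite (leq_ltn_trans (leq_subr _ _)) // ltn_predL N_gt0.
by rewrite coef_poly lt_iN subKn // expr2.
Qed.

Lemma norm_eq1_root_power x : inZz z x -> x * x^* = 1 -> exists j, x = z ^+ j.
Proof.
move=> /inZz_small[p sp ->] hn.
have [t [ct1 ct0]] := sum_sqr_eq1 (sum_sqr_coef_norm1 sp hn).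
have -> : zhorner z p = (p`_t)%:~R * z ^+ t.
  by rewrite (zhorner_coef _ sp) (bigD1 t) //= big1 ?addr0 // => i /ct0 ->; rewrite mul0r.
move/eqP: ct1; rewrite sqrf_eq1 => /orP[]/eqP ->; first by exists t; rewrite mul1r.
by exists (t + N)%N; rewrite exprD prim_expr_half mulrN1 mulN1r.
Qed.

Lemma norm_eq_pow4 l x : inZz z x -> x * x^* = 4 ^+ l -> exists j, x = 2 ^+ l * z ^+ j.
Proof.
elim: l x => [|l IH] x hx hn.
  by have [j ->] := norm_eq1_root_power hx hn; exists j; rewrite mul1r.
(* As 2 = pi^N w, pi^(2N) divides x x^*, so pi^N divides x, and 2 divides pi^N. *)
have [y hy Dx] : zdvd z 2 x.
  have [w hw e2] := pi_expN_dvd2.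
  apply: zdvd_trans two_dvd_pi_expN (pi_dvd_norm hx _).
  exists (w ^+ 2 * 4 ^+ l); first exact/inZzM/inZzX/inZz_nat/inZzX.
  have e4 : (4 : algC) = (pi ^+ N * w) ^+ 2 by rewrite -e2; ring.
  by rewrite hn exprS {1}e4 -addnn exprD; ring.
have [|j Dy] := IH y hy.
  apply: (mulfI (_ : 4 != 0)); first by rewrite pnatr_eq0.
  by rewrite -exprS -hn Dx rmorphM /= rmorph_nat; ring.
by exists j; rewrite Dx Dy exprS mulrA.
Qed.

Lemma zpoly_inj c b :
  zpoly z N c = zpoly z N b -> forall t, (t < N)%N -> c t = b t.
Proof.
move=> e t lt_tN; pose p := \poly_(i < N) (c i - b i).
have p0 : p = 0.
  apply: zhorner_eq0_small; first exact: size_poly.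
  rewrite (zhorner_coef _ (size_poly _ _)).
  transitivity (zpoly z N (fun i => c i - b i)).
    by apply: eq_bigr => i _; rewrite coef_poly ltn_ord.
  by rewrite zpolyB e subrr.
apply/eqP; rewrite -subr_eq0; apply/eqP.
by have := congr1 (fun q : {poly int} => q`_t) p0; rewrite coef_poly lt_tN coef0.
Qed.

Lemma zpoly_norm_pow4 l c :
  zpoly z N c * (zpoly z N c)^* = 4 ^+ l <->
  exists r, exists s : bool, (r < N)%N /\
    forall t, (t < N)%N -> c t = (-1) ^+ s * 2 ^+ l * (t == r)%:R.
Proof.
split=> [/(norm_eq_pow4 (inZz_zpoly _ _ _))[j Dc] | [r [s [lt_rN Dc]]]].
  exists (j %% N)%N, (odd (j %/ N)); split; first by rewrite ltn_pmod ?N_gt0.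
  apply: zpoly_inj; rewrite Dc zpoly_delta ?ltn_pmod ?N_gt0 //.
  rewrite {1}(divn_eq j N) exprD mulnC exprM prim_expr_half.
  by rewrite !rmorphM rmorph_sign signr_odd rmorphXn /= (_ : 2%:~R = 2) //; ring.
rewrite (eq_zpoly _ Dc) zpoly_delta //; set a : algC := _%:~R.
have ca : a^* = a by rewrite /a rmorph_int.
rewrite rmorphM /= ca rmorphXn mulrACA -exprMn root_mul_conj expr1n mulr1 /a -intrM.
by rewrite mulrACA -expr2 sqrr_sign mul1r -exprMn rmorphXn.
Qed.

End CyclotomicIntegers.

(** * The Sylvester-Hadamard transform *)

Definition hadamard m (c : nat -> int) (i : nat) : int :=
  \sum_(t < 2 ^ m) sylv m i t * c t.

Section SylvesterHadamard.
Implicit Types (m r i t : nat) (a : int) (c b : nat -> int).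

Lemma sylv_sym m r t : sylv m r t = sylv m t r.
Proof. by elim: m r t => [//|m IH] r t /=; rewrite andbC IH. Qed.

Lemma sylv_sign m r t : sylv m r t = 1 \/ sylv m r t = -1.
Proof.
elim: m r t => [|m IH] r t /=; first by left.
by case: (IH (r %% 2 ^ m)%N (t %% 2 ^ m)%N) => ->; case: ifP; rewrite ?mulN1r; auto.
Qed.

Local Arguments sylv : simpl never.

Lemma sylvS m (e1 e2 : bool) r t : (r < 2 ^ m)%N -> (t < 2 ^ m)%N ->
  sylv m.+1 (r + e1 * 2 ^ m) (t + e2 * 2 ^ m) = (-1) ^+ (e1 && e2) * sylv m r t.
Proof.
move=> lt_r lt_t; rewrite [LHS]/sylv -/sylv [(r + _)%N]addnC [(t + _)%N]addnC.
rewrite !modnMDl !modn_small //.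
have [hr ht] : (2 ^ m <= r)%N = false /\ (2 ^ m <= t)%N = false.
  by rewrite (leqNgt _ r) (leqNgt _ t) lt_r lt_t.
by case: e1; case: e2; rewrite /= ?mul1n ?mul0n ?addn0 ?leq_addr ?hr ?ht ?andbF ?expr1.
Qed.

Lemma eq_hadamard m c b i :
  (forall t, (t < 2 ^ m)%N -> c t = b t) -> hadamard m c i = hadamard m b i.
Proof. by move=> e; apply: eq_bigr => t _; rewrite e. Qed.

Lemma hadamardS m c (e : bool) i : (i < 2 ^ m)%N ->
  hadamard m.+1 c (i + e * 2 ^ m) =
  hadamard m (fun t => c t + (-1) ^+ e * c (t + 2 ^ m)%N) i.
Proof.
move=> lt_i; rewrite /hadamard expnS mul2n -addnn big_split_ord /=.
rewrite [RHS](eq_bigr (fun t : 'I_(2 ^ m) =>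
  sylv m i t * c t + sylv m i t * ((-1) ^+ e * c (t + 2 ^ m)%N))); last first.
  by move=> t _; rewrite mulrDr.
rewrite big_split; congr (_ + _); apply: eq_bigr => t _.
  by have := sylvS e false lt_i (ltn_ord t); rewrite mul0n addn0 andbF mul1r => ->.
have := sylvS e true lt_i (ltn_ord t); rewrite mul1n andbT [(t + _)%N]addnC => ->.
by rewrite addnC; ring.
Qed.

Lemma hadamardS_lo m c i : (i < 2 ^ m)%N ->
  hadamard m.+1 c i = hadamard m (fun t => c t + c (t + 2 ^ m)%N) i.
Proof.
move=> lt_i; have := hadamardS c false lt_i; rewrite mul0n addn0 => ->.
by apply: eq_hadamard => t _; rewrite mul1r.
Qed.

Lemma hadamardS_hi m c i : (i < 2 ^ m)%N ->
  hadamard m.+1 c (i + 2 ^ m) = hadamard m (fun t => c t - c (t + 2 ^ m)%N) i.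
Proof.
move=> lt_i; have := hadamardS c true lt_i; rewrite mul1n => ->.
by apply: eq_hadamard => t _; rewrite mulN1r.
Qed.

Lemma hadamard_lin m c b (x y : int) i :
  x * hadamard m c i + y * hadamard m b i = hadamard m (fun t => x * c t + y * b t) i.
Proof. by rewrite /hadamard !mulr_sumr -big_split; apply: eq_bigr => t _ /=; ring. Qed.

Lemma hadamardK m c t : (t < 2 ^ m)%N ->
  hadamard m (hadamard m c) t = (2 ^ m)%:R * c t.
Proof.
elim: m c t => [|m IH] c t.
  by rewrite expn0 ltnS leqn0 => /eqP ->; rewrite /hadamard !big_ord1 !mul1r.
set h := (2 ^ m)%N => lt_t.
have [e [t0 [lt_t0 ->]]] : exists e : bool, exists t0, (t0 < h)%N /\ t = (t0 + e * h)%N.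
  have [lt_th|le_ht] := ltnP t h; first by exists false, t; rewrite addn0.
  exists true, (t - h)%N; rewrite mul1n subnK //; split => //.
  by rewrite ltn_subLR // addnn -mul2n -expnS.
rewrite hadamardS //.
transitivity (hadamard m (hadamard m (fun u => 2 * c (u + e * h)%N)) t0).
  apply: eq_hadamard => s lt_s.
  rewrite hadamardS_lo // hadamardS_hi // -[hadamard m _ s]mul1r hadamard_lin.
  by apply: eq_hadamard => u _; case: e; rewrite /= ?mul1n ?mul0n ?addn0; ring.
by rewrite IH // expnS natrM; ring.
Qed.

Lemma hadamard_inj m c b :
  (forall i, (i < 2 ^ m)%N -> hadamard m c i = hadamard m b i) ->
  forall t, (t < 2 ^ m)%N -> c t = b t.
Proof.
move=> e t lt_t; apply: (@mulfI _ (2 ^ m)%:R); first by rewrite pnatr_eq0 expn_eq0.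
by rewrite -!hadamardK //; apply: eq_hadamard.
Qed.

Lemma hadamard_delta m a r i : (r < 2 ^ m)%N ->
  hadamard m (fun t => a * (t == r)%:R) i = a * sylv m r i.
Proof.
move=> lt_r; rewrite /hadamard (bigD1 (Ordinal lt_r)) //= eqxx big1 ?addr0.
  by rewrite sylv_sym mulr1 mulrC.
by move=> t; rewrite -val_eqE /= => /negbTE ->; rewrite !mulr0.
Qed.

Lemma hadamard_eq_delta m a r c : (r < 2 ^ m)%N ->
  (forall t, (t < 2 ^ m)%N -> c t = a * (t == r)%:R) <->
  (forall i, (i < 2 ^ m)%N -> hadamard m c i = a * sylv m r i).
Proof.
move=> lt_r; split=> [Dc i _ | Hc]; first by rewrite (eq_hadamard _ Dc) hadamard_delta.
by apply: hadamard_inj => i lt_i; rewrite Hc // hadamard_delta.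
Qed.

Lemma hadamard_eq0 m c :
  (forall t, (t < 2 ^ m)%N -> c t = 0) <-> (forall i, (i < 2 ^ m)%N -> hadamard m c i = 0).
Proof.
have H0 i : hadamard m (fun=> 0) i = 0 by apply: big1 => t _; rewrite mulr0.
split=> [Dc i _ | Hc]; first by rewrite (eq_hadamard _ Dc) H0.
by apply: hadamard_inj => i lt_i; rewrite Hc // H0.
Qed.

End SylvesterHadamard.

(** * Generalized bent functions *)

Lemma odd_div_mod m a j : (j < m)%N -> odd (a %% 2 ^ m %/ 2 ^ j) = odd (a %/ 2 ^ j).
Proof.
move=> lt_jm; have e : (2 ^ m = 2 ^ (m - j) * 2 ^ j)%N by rewrite -expnD subnK // ltnW.
have {2}-> : a = (a %/ 2 ^ m * 2 ^ (m - j) * 2 ^ j + a %% 2 ^ m)%N.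
  by rewrite -mulnA -e -divn_eq.
rewrite divnMDl ?expn_gt0 // oddD oddM oddX.
by rewrite subn_eq0 leqNgt lt_jm andbF.
Qed.

Lemma odd_div_exp m r : (r < 2 ^ m.+1)%N -> odd (r %/ 2 ^ m) = (2 ^ m <= r)%N.
Proof.
move=> lt_r; have [le_r|lt_r'] := leqP; last by rewrite divn_small.
have {1}-> : r = (1 * 2 ^ m + (r - 2 ^ m))%N by rewrite mul1n addnC subnK.
rewrite divnMDl ?expn_gt0 // divn_small //.
by move: lt_r; rewrite expnS mul2n -addnn; lia.
Qed.

Lemma sylv_bits m r t : (r < 2 ^ m)%N -> (t < 2 ^ m)%N ->
  sylv m r t = (-1) ^+ (\big[addb/false]_(j < m) (odd (r %/ 2 ^ j) && odd (t %/ 2 ^ j))).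
Proof.
elim: m r t => [|m IH] r t lt_r lt_t; first by rewrite big_ord0.
rewrite /= IH ?ltn_pmod ?expn_gt0 // big_ord_recr /= signr_addb mulrC.
rewrite !odd_div_exp //; congr (_ * _); last by case: (_ && _).
by congr ((-1) ^+ nat_of_bool _); apply: eq_bigr => j _; rewrite !odd_div_mod.
Qed.

Lemma zeta_prim m : (2 ^ m.+1).-primitive_root (zeta m.+1).
Proof.
have zN : zeta m.+1 ^+ (2 ^ m)%N = -1 by rewrite /zeta /= rootCK // expn_gt0.
have z1 : zeta m.+1 ^+ (2 ^ m.+1)%N = 1 by rewrite expnSr exprM zN sqrrN expr1n.
have [d prim_d /(dvdn_pfactor _ _ (isT : prime 2))[e le_e De]] :=
  prim_order_exists (expn_gt0 2 m.+1) z1.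
have [e_m|ne_e] := eqVneq e m.+1; first by rewrite De e_m in prim_d.
have : (d %| 2 ^ m)%N by rewrite De dvdn_exp2l // -ltnS ltn_neqAle ne_e.
rewrite (prim_order_dvd prim_d) zN -subr_eq0 -opprD oppr_eq0 (_ : 1 + 1 = 2%:R) //.
by rewrite pnatr_eq0.
Qed.

Definition zcoef n k (f : Vn n -> 'I_(2 ^ k)) (u : Vn n) (t : nat) : int :=
  \sum_(x | (f x %% 2 ^ k.-1 == t)%N) (-1) ^+ (Defs.comp f k.-1 x (+) dotv u x).

Section Decomposition.
Variables (n K : nat) (f : Vn n -> 'I_(2 ^ K.+1)) (u : Vn n).

Lemma sum_by_residue (R : nmodType) (F : Vn n -> R) :
  \sum_x F x = \sum_(t < 2 ^ K) \sum_(x | (f x %% 2 ^ K == t)%N) F x.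
Proof.
by rewrite (partition_big (fun x : Vn n => Ordinal (ltn_pmod (f x) (expn_gt0 2 K))) xpredT).
Qed.

Lemma walsh_gi i : (i < 2 ^ K)%N -> walsh (gi f i) u = hadamard K (zcoef f u) i.
Proof.
move=> lt_i; rewrite /walsh sum_by_residue; apply: eq_bigr => t _.
rewrite /zcoef mulr_sumr; apply: eq_big => // x /eqP <-.
rewrite /gi /= addbAC signr_addb mulrC; congr (_ * _).
rewrite sylv_bits ?ltn_pmod ?expn_gt0 //; congr ((-1) ^+ nat_of_bool _).
by apply: eq_bigr => j _; rewrite odd_div_mod.
Qed.

Lemma gwalsh_zpoly : gwalsh f u = zpoly (zeta K.+1) (2 ^ K) (zcoef f u).
Proof.
rewrite /gwalsh sum_by_residue; apply: eq_bigr => t _.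
rewrite /zcoef rmorph_sum mulr_suml; apply: eq_big => // x /eqP <-.
rewrite rmorph_sign mulrC /Defs.comp /= {1}(divn_eq (f x) (2 ^ K)) exprD mulnC exprM.
by rewrite (prim_expr_half (zeta_prim K)) signr_addb signr_odd; ring.
Qed.

End Decomposition.

Lemma ltn_double_split h (P : nat -> Prop) :
  (forall t, (t < h + h)%N -> P t) <-> (forall t, (t < h)%N -> P t /\ P (t + h)%N).
Proof.
split=> [E t lt_th | E t lt_t]; first by split; apply: E; lia.
have [lt_th|le_ht] := ltnP t h; first by have [] := E t lt_th.
have /E[_] : (t - h < h)%N by lia.
by rewrite (subnK le_ht).
Qed.

Lemma delta_split h (a : int) (d x y : nat -> int) :
  (forall t, (t < h)%N -> d t = y t /\ d (t + h)%N = x t) ->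
  (exists r, exists s : bool, (r < h + h)%N /\
     forall t, (t < h + h)%N -> d t = (-1) ^+ s * a * (t == r)%:R) <->
  (exists r, exists s : bool, (r < h)%N /\
     ((forall t, (t < h)%N -> x t = (-1) ^+ s * a * (t == r)%:R /\ y t = 0) \/
      (forall t, (t < h)%N -> x t = 0 /\ y t = (-1) ^+ s * a * (t == r)%:R))).
Proof.
move=> Dd; split=> [[r [s [lt_r /ltn_double_split Ed]]] | [r [s [lt_rh E]]]].
  have [lt_rh|le_hr] := ltnP r h.
    exists r, s; split=> //; right=> t lt_th.
    have [[E1 E2] [D1 D2]] := (Ed t lt_th, Dd t lt_th).
    by rewrite -D1 -D2 E1 E2 (gtn_eqF (leq_trans lt_rh (leq_addl t h))) mulr0.
  exists (r - h)%N, s; split; first by lia.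
  left=> t lt_th; have [[E1 E2] [D1 D2]] := (Ed t lt_th, Dd t lt_th).
  have -> : (t == r - h)%N = (t + h == r)%N by rewrite -(eqn_add2r h) subnK.
  by rewrite -D1 -D2 E1 E2 (ltn_eqF (leq_trans lt_th le_hr)) mulr0.
case: E => E; [exists (r + h)%N, s | exists r, s]; (split; first by lia);
  apply/ltn_double_split => t lt_th; have [[E1 E2] [D1 D2]] := (E t lt_th, Dd t lt_th);
  rewrite D1 D2 E1 E2 ?eqn_add2r.
- by rewrite (ltn_eqF (leq_trans lt_th (leq_addl r h))) mulr0.
- by rewrite (gtn_eqF (leq_trans lt_rh (leq_addl t h))) mulr0.
Qed.

Lemma norm_eq_sqrtC (x a : algC) : 0 <= a -> `|x| = sqrtC a <-> x * x^* = a.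
Proof.
move=> a_ge0; rewrite -normCK; split=> [-> | <-]; first by rewrite sqrtCK.
by rewrite sqrCK ?normr_ge0.
Qed.

Lemma exists_shape_iff n (P Q : nat -> bool -> Prop) :
  (forall r s, (r < n)%N -> P r s <-> Q r s) ->
  (exists r, exists s : bool, (r < n)%N /\ P r s) <->
  (exists r, exists s : bool, (r < n)%N /\ Q r s).
Proof.
by move=> E; split=> [] [r [s [lt_r H]]]; exists r, s; split=> //; apply/(E r s lt_r).
Qed.

Lemma expr2n_even n : ~~ odd n -> 2 ^+ n = 4 ^+ (n %/ 2) :> algC.
Proof.
move=> n_even; rewrite -{1}(divnK (_ : 2 %| n)%N) ?dvdn2 // mulnC exprM.
by rewrite expr2 -natrM.
Qed.

Lemma gbent_at_even n K (f : Vn n -> 'I_(2 ^ K.+1)) u : ~~ odd n ->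
  `|gwalsh f u| = sqrtC (2 ^+ n) <->
  exists r, exists s : bool, (r < 2 ^ K)%N /\
    forall i, (i < 2 ^ K)%N -> walsh (gi f i) u = (-1) ^+ s * 2 ^+ (n %/ 2) * sylv K r i.
Proof.
move=> n_even; apply: iff_trans (norm_eq_sqrtC _ (exprn_ge0 _ (ler0n _ 2))) _.
rewrite expr2n_even // gwalsh_zpoly.
apply: iff_trans (zpoly_norm_pow4 (zeta_prim K) _ _) _.
apply: exists_shape_iff => r s lt_r; apply: iff_trans (hadamard_eq_delta _ _ lt_r) _.
by split=> E i lt_i; [rewrite walsh_gi // E | rewrite -walsh_gi // E].
Qed.

Lemma zpoly_mul_1addX z h c : z ^+ (h + h) = -1 ->
  zpoly z (h + h) c * (1 + z ^+ h) =
  zpoly z h (fun t => c t - c (t + h)%N) + z ^+ h * zpoly z h (fun t => c t + c (t + h)%N).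
Proof.
move=> zhh; have i2 : z ^+ h * z ^+ h = -1 by rewrite -exprD.
by rewrite zpoly_split zpolyB zpolyD; ring: i2.
Qed.

Lemma norm_gwalsh_odd n M (f : Vn n -> 'I_(2 ^ M.+2)) u : odd n ->
  let x t := zcoef f u t + zcoef f u (t + 2 ^ M)%N in
  let y t := zcoef f u t - zcoef f u (t + 2 ^ M)%N in
  `|gwalsh f u| = sqrtC (2 ^+ n) <->
  exists r, exists s : bool, (r < 2 ^ M)%N /\
    ((forall t, (t < 2 ^ M)%N -> x t = (-1) ^+ s * 2 ^+ ((n + 1) %/ 2) * (t == r)%:R /\ y t = 0) \/
     (forall t, (t < 2 ^ M)%N -> x t = 0 /\ y t = (-1) ^+ s * 2 ^+ ((n + 1) %/ 2) * (t == r)%:R)).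
Proof.
move=> n_odd x y; set h := (2 ^ M)%N; set l := ((n + 1) %/ 2)%N.
pose d t := if (t < h)%N then y t else x (t - h)%N.
have Dd t : (t < h)%N -> d t = y t /\ d (t + h)%N = x t.
  by move=> lt_th; rewrite /d lt_th ltnNge leq_addl addnK.
have hh : (2 ^ M.+1 = h + h)%N by rewrite expnS mul2n addnn.
have zt_prim := zeta_prim M.+1; set zt := zeta M.+2 in zt_prim.
have zhh : zt ^+ (h + h) = -1 by rewrite -hh (prim_expr_half zt_prim).
have norm_1i : (1 + zt ^+ h) * (1 + zt ^+ h)^* = 2.
  have i2 : zt ^+ h * zt ^+ h = -1 by rewrite -exprD.
  have ic : zt ^+ h * (zt ^+ h)^* = 1 by rewrite rmorphXn -exprMn (root_mul_conj zt_prim) expr1n.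
  have ci : (zt ^+ h)^* = - zt ^+ h.
    by apply: oppr_inj; rewrite opprK -[in RHS](mulr1 (zt ^+ h)) -ic mulrA i2 mulN1r.
  by rewrite rmorphD rmorph1 /= ci; ring: i2.
have Gd : gwalsh f u * (1 + zt ^+ h) = zpoly zt (2 ^ M.+1) d.
  rewrite gwalsh_zpoly hh zpoly_mul_1addX // zpoly_split.
  by congr (_ + _ * _); apply: eq_zpoly => t /Dd[].
apply: iff_trans (norm_eq_sqrtC _ (exprn_ge0 _ (ler0n _ 2))) _.
apply: (@iff_trans _ (zpoly zt (2 ^ M.+1) d * (zpoly zt (2 ^ M.+1) d)^* = 4 ^+ l)).
  rewrite -Gd rmorphM mulrACA norm_1i /l addn1 -expr2n_even /= ?negbK // exprSr.
  have two_neq0 : (2 : algC) != 0 by rewrite pnatr_eq0.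
  by split=> [-> // | /(mulIf two_neq0)].
apply: iff_trans (zpoly_norm_pow4 zt_prim _ _) _; rewrite hh.
exact: delta_split.
Qed.

Lemma forall_ltn_and_iff n (P1 P2 Q1 Q2 : nat -> Prop) :
  ((forall t, (t < n)%N -> P1 t) <-> (forall t, (t < n)%N -> Q1 t)) ->
  ((forall t, (t < n)%N -> P2 t) <-> (forall t, (t < n)%N -> Q2 t)) ->
  (forall t, (t < n)%N -> P1 t /\ P2 t) <-> (forall t, (t < n)%N -> Q1 t /\ Q2 t).
Proof.
move=> [E1 E1'] [E2 E2']; split=> E t lt_t; split.
- by apply: (E1 _ t lt_t) => j /E[].
- by apply: (E2 _ t lt_t) => j /E[].
- by apply: (E1' _ t lt_t) => j /E[].
- by apply: (E2' _ t lt_t) => j /E[].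
Qed.

Lemma forall_ltn_eq_iff n (F G V : nat -> int) : (forall i, (i < n)%N -> F i = G i) ->
  (forall i, (i < n)%N -> F i = V i) <-> (forall i, (i < n)%N -> G i = V i).
Proof. by move=> FG; split=> E i lt_i; [rewrite -FG // E | rewrite FG // E]. Qed.

Lemma gbent_at_odd n M (f : Vn n -> 'I_(2 ^ M.+2)) u : odd n ->
  `|gwalsh f u| = sqrtC (2 ^+ n) <->
  exists r, exists s : bool, (r < 2 ^ M)%N /\
    ((forall i, (i < 2 ^ M)%N ->
        walsh (gi f i) u = (-1) ^+ s * 2 ^+ ((n + 1) %/ 2) * sylv M r i /\
        walsh (gi f (i + 2 ^ M)) u = 0) \/
     (forall i, (i < 2 ^ M)%N ->
        walsh (gi f i) u = 0 /\
        walsh (gi f (i + 2 ^ M)) u = (-1) ^+ s * 2 ^+ ((n + 1) %/ 2) * sylv M r i)).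
Proof.
move=> n_odd; apply: iff_trans (norm_gwalsh_odd f u n_odd) _.
apply: exists_shape_iff => r s lt_r; set h := (2 ^ M)%N; set c := zcoef f u.
have hh : (2 ^ M.+1 = h + h)%N by rewrite expnS mul2n addnn.
have W_lo i : (i < h)%N -> hadamard M (fun t => c t + c (t + h)%N) i = walsh (gi f i) u.
  by move=> lt_ih; rewrite walsh_gi ?hadamardS_lo // hh ltn_addr.
have W_hi i : (i < h)%N -> hadamard M (fun t => c t - c (t + h)%N) i = walsh (gi f (i + h)) u.
  by move=> lt_ih; rewrite walsh_gi ?hadamardS_hi // hh ltn_add2r.
have E_lo a := iff_trans (hadamard_eq_delta a _ lt_r) (forall_ltn_eq_iff _ W_lo).
have E_hi a := iff_trans (hadamard_eq_delta a _ lt_r) (forall_ltn_eq_iff _ W_hi).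
have E0_lo := iff_trans (hadamard_eq0 M _) (forall_ltn_eq_iff (fun=> 0) W_lo).
have E0_hi := iff_trans (hadamard_eq0 M _) (forall_ltn_eq_iff (fun=> 0) W_hi).
exact: iff_trans (or_iff_compat_r _ (forall_ltn_and_iff (E_lo _) E0_hi))
                 (or_iff_compat_l _ (forall_ltn_and_iff E0_lo (E_hi _))).
Qed.

Lemma norm_sign_pow2_sylv (s : bool) l m r i :
  `|((-1) ^+ s * 2 ^+ l * sylv m r i)%:~R : algC| = 2 ^+ l.
Proof.
rewrite !rmorphM rmorph_sign rmorphXn !normrM normr_sign normrX normr_nat mul1r.
by case: (sylv_sign m r i) => ->; rewrite ?rmorphN rmorph1 ?normrN normr1 mulr1.
Qed.

Lemma sign_pow2_sylv_in (s : bool) l m r i :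
  (-1) ^+ s * 2 ^+ l * sylv m r i \in [:: 0; 2 ^+ l; - 2 ^+ l].
Proof.
case: (sylv_sign m r i) => ->; case: s;
  by rewrite !inE ?mulr1 ?mulrN1 ?mulN1r ?mul1r ?opprK eqxx ?orbT.
Qed.

Lemma gbent_even n K (f : Vn n -> 'I_(2 ^ K.+1)) : ~~ odd n ->
  gbent f <->
  (forall i, (i < 2 ^ K)%N -> bent (gi f i)) /\
  (forall u, exists r, exists s : bool, (r < 2 ^ K)%N /\
    forall i, (i < 2 ^ K)%N -> walsh (gi f i) u = (-1) ^+ s * 2 ^+ (n %/ 2) * sylv K r i).
Proof.
move=> n_even; split=> [gbent_f | [_ shape] u]; last exact/(gbent_at_even _ _ n_even).
have shape u := (gbent_at_even f u n_even).1 (gbent_f u).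
split=> // i lt_i u; have [r [s [_ W]]] := shape u.
rewrite /bent W // norm_sign_pow2_sylv -{2}(divnK (_ : 2 %| n)%N) ?dvdn2 //.
by rewrite exprM sqrCK // exprn_ge0 // ler0n.
Qed.

Lemma gbent_odd n M (f : Vn n -> 'I_(2 ^ M.+2)) : odd n ->
  gbent f <->
  (forall i, (i < 2 ^ M.+1)%N -> semibent (gi f i)) /\
  (forall u, exists r, exists s : bool, (r < 2 ^ M)%N /\
    ((forall i, (i < 2 ^ M)%N ->
        walsh (gi f i) u = (-1) ^+ s * 2 ^+ ((n + 1) %/ 2) * sylv M r i /\
        walsh (gi f (i + 2 ^ M)) u = 0) \/
     (forall i, (i < 2 ^ M)%N ->
        walsh (gi f i) u = 0 /\
        walsh (gi f (i + 2 ^ M)) u = (-1) ^+ s * 2 ^+ ((n + 1) %/ 2) * sylv M r i))).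
Proof.
move=> n_odd; split=> [gbent_f | [_ shape] u]; last exact/(gbent_at_odd _ _ n_odd).
have shape u := (gbent_at_odd f u n_odd).1 (gbent_f u).
split=> // i lt_i u; have [r [s [_ W]]] := shape u; rewrite /semibent.
have [lt_ih|le_hi] := ltnP i (2 ^ M).
  by case: W => /(_ i lt_ih)[-> _]; rewrite ?mem_head ?sign_pow2_sylv_in.
have lt_i' : (i - 2 ^ M < 2 ^ M)%N by rewrite ltn_subLR // addnn -mul2n -expnS.
by rewrite -(subnK le_hi); case: W => /(_ _ lt_i')[_ ->]; rewrite ?mem_head ?sign_pow2_sylv_in.
Qed.

Unset Implicit Arguments.

Theorem theorem1 (n k : nat) (hn : (1 <= n)%N) (hk : (2 <= k)%N)
    (f : Vn n -> 'I_(2 ^ k)) :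
  (~~ odd n ->
     (gbent f <->
        ((forall i, (i < 2 ^ k.-1)%N -> bent (gi f i)) /\
         (forall u : Vn n, exists r, exists s : bool, (r < 2 ^ k.-1)%N /\
            forall i, (i < 2 ^ k.-1)%N ->
              walsh (gi f i) u = (-1) ^+ s * 2 ^+ (n %/ 2) * sylv k.-1 r i))))
  /\
  (odd n ->
     (gbent f <->
        ((forall i, (i < 2 ^ k.-1)%N -> semibent (gi f i)) /\
         (forall u : Vn n, exists r, exists s : bool, (r < 2 ^ (k - 2))%N /\
            ((forall i, (i < 2 ^ (k - 2))%N ->
                walsh (gi f i) u = (-1) ^+ s * 2 ^+ ((n + 1) %/ 2) * sylv (k - 2) r i
                /\ walsh (gi f (i + 2 ^ (k - 2))) u = 0)
             \/
             (forall i, (i < 2 ^ (k - 2))%N ->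
                walsh (gi f i) u = 0
                /\ walsh (gi f (i + 2 ^ (k - 2))) u
                   = (-1) ^+ s * 2 ^+ ((n + 1) %/ 2) * sylv (k - 2) r i)))))).
Proof.
case: k hk f => [|[|M]] // _ f; rewrite subSS subSS subn0.
by split; [exact: gbent_even | exact: gbent_odd].
Qed.
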